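(* Let $(z_n)_{n\ge0}$ be a homogeneous Markov chain on $\mathbb{Z}_+^k$ satisfying assumptions (A1) and (A2) below, with associated maps $p_w$ and distribution process $(x_n)$. Let $K\subset S_k$ be compact. If $$\lambda=\inf_{x\in K}\sum_w p_w(x)\,\alpha(w)>0,$$ then almost surely on the event $\{L(\{x_n\}_{n\ge0})\subset K\}\cap\{\lim_{n\to\infty}|z_n|=\infty\}$ we have $\liminf_{n\to\infty}\frac{|z_n|}{n}\ge\lambda$.
   Context: Fix integers $k\ge1$, $m\ge1$. For $w\in\mathbb{Z}^k$, $|w|=\sum_i|w^i|$, $\alpha(w)=\sum_iw^i$; sums over $w$ range over $w\in\mathbb{Z}^k$ with $|w|\le m$. $\mathbb{Z}_+^k=\{z\in\mathbb{Z}^k:z^i\ge0\}$, $S_k=\{x\in\mathbb{R}^k:x^i\ge0,\sum_ix^i=1\}$. $(z_n)$ has transition kernel $\Pi(z,z')=P[z_{n+1}=z'\mid z_n=z]$; $x_n=z_n/|z_n|$ if $z_n\ne0$, else $x_n=0$. (A1) $|z_{n+1}-z_n|\le m$ for all $n$. (A2) There exist Lipschitz maps $p_w:S_k\to[0,1]$ ($|w|\le m$) and $a>0$ with $|p_w(z/|z|)-\Pi(z,z+w)|\le a/|z|$ for all nonzero $z\in\mathbb{Z}_+^k$, $|w|\le m$. $L(\{x_n\})$ is the set of limit points of $(x_n)$. *)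

From HB Require Import structures.
From mathcomp Require Import all_boot all_order all_algebra.
From mathcomp Require Import all_classical all_reals all_analysis.
Set Implicit Arguments. Unset Strict Implicit. Unset Printing Implicit Defensive.
Import Order.TTheory GRing.Theory Num.Theory.
Import numFieldNormedType.Exports.
Local Open Scope classical_set_scope.
Local Open Scope ring_scope.

Definition zvec (k : nat) := {ffun 'I_k -> int}.

Definition norm1 (k : nat) (w : zvec k) : nat := (\sum_(i < k) `|w i|)%N.

Definition alpha (k : nat) (w : zvec k) : int := \sum_(i < k) w i.

Definition nonneg_vec (k : nat) (z : zvec k) : Prop := forall i, (0 <= z i)%R.

Definition zadd (k : nat) (z w : zvec k) : zvec k := [ffun i => z i + w i].
Definition zsub (k : nat) (z w : zvec k) : zvec k := [ffun i => z i - w i].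

Definition simplex (R : realType) (k : nat) : set 'rV[R]_k :=
  [set x | (forall i, 0 <= x ord0 i) /\ \sum_(i < k) x ord0 i = 1].

(* l1 distance on R^k (all norms on R^k are equivalent). *)
Definition dist1 (R : realType) (k : nat) (x y : 'rV[R]_k) : R :=
  \sum_(i < k) `|x ord0 i - y ord0 i|.

Definition distr_vec (R : realType) (k : nat) (z : zvec k) : 'rV[R]_k :=
  if norm1 z == 0%N then 0 else \row_i ((z i)%:~R / (norm1 z)%:R).

(* Enumeration of {w in Z^k : |w| <= m}: a function f : 'I_k -> 'I_(2m+1)
   encodes w^i = f i - m; we then restrict to |w| <= m. *)
Definition wdecode (k m : nat) (f : {ffun 'I_k -> 'I_(2 * m + 1)}) : zvec k :=
  [ffun i => (nat_of_ord (f i))%:Z - m%:Z].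

Definition sum_w (R : realType) (k m : nat) (F : zvec k -> R) : R :=
  \sum_(f : {ffun 'I_k -> 'I_(2 * m + 1)} | (norm1 (wdecode f) <= m)%N)
     F (wdecode f).

Definition limit_points (R : realType) (k : nat) (u : nat -> 'rV[R]_k)
  : set 'rV[R]_k :=
  [set y | forall e : R, 0 < e -> forall N : nat,
      exists n : nat, (N <= n)%N /\ `|u n - y| < e].

Definition markov_chain (d : measure_display) (Omega : measurableType d)
  (R : realType) (P : probability Omega R) (k : nat)
  (z : nat -> Omega -> zvec k) (Pi : zvec k -> zvec k -> R) : Prop :=
  forall (n : nat) (s : 'I_n.+1 -> zvec k) (s' : zvec k),
    P [set om | (forall i : 'I_n.+1, z i om = s i) /\ z n.+1 om = s']
    = ((Pi (s ord_max) s')%:E * P [set om | forall i : 'I_n.+1, z i om = s i])%E.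

Arguments simplex R k : clear implicits.
Arguments distr_vec R {k} z.

(* Let mu(s) = sum_w Pi(s, s + w) alpha(w) and
   S_n = sum_(i < n) (alpha(z_(i+1) - z_i) - mu(z_i)), so that
   |z_n| = alpha(z_n) = alpha(z_0) + sum_(i < n) mu(z_i) + S_n.
   The increments of S_n are bounded by 2m and centred given the past, so a
   Hoeffding estimate of E[exp(-th S_n)], summed over all admissible walks of
   length n, gives P(S_n <= -n eps) <= r^n with r < 1; by Borel-Cantelli,
   almost surely S_n > -n eps eventually, for every eps > 0 and every start.
   By (A2), mu(z) >= g(z/|z|) - C/|z| with g(x) = sum_w p_w(x) alpha(w), and g
   is Lipschitz on S_k; as x_n eventually stays close to K and |z_n| -> oo,
   mu(z_n) >= lambda - eta eventually, and dividing by n gives the claim. *)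

From HB Require Import structures.
From mathcomp Require Import all_boot all_order all_algebra.
From mathcomp Require Import all_classical all_reals all_analysis.
From mathcomp Require Import zify ring lra.
Import Order.TTheory GRing.Theory Num.Theory.
Import numFieldNormedType.Exports.
Local Open Scope classical_set_scope.
Local Open Scope ring_scope.
Set Implicit Arguments. Unset Strict Implicit. Unset Printing Implicit Defensive.

Section Walks.
Variables (k m : nat).
Local Notation code := {ffun 'I_k -> 'I_(2 * m + 1)}.

Definition admissible (f : code) : bool := (norm1 (wdecode f) <= m)%N.

Definition admissible_codes : seq code := [seq f <- enum code | admissible f].

Lemma sum_wE (R : realType) (F : zvec k -> R) :
  sum_w m F = \sum_(f <- admissible_codes) F (wdecode f).
Proof. by rewrite /sum_w /admissible_codes big_filter big_enum_cond. Qed.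

Lemma mem_admissible_codes (f : code) : (f \in admissible_codes) = admissible f.
Proof. by rewrite mem_filter mem_enum andbT. Qed.

Lemma uniq_admissible_codes : uniq admissible_codes.
Proof. exact/filter_uniq/enum_uniq. Qed.

Fixpoint walk_end (s : zvec k) (q : seq code) : zvec k :=
  if q is f :: q' then walk_end (zadd s (wdecode f)) q' else s.

Lemma walk_end_rcons s q f : walk_end s (rcons q f) = zadd (walk_end s q) (wdecode f).
Proof. by elim: q s => //= g q IH s; rewrite IH. Qed.

Fixpoint walks (n : nat) : seq (seq code) :=
  if n is n'.+1 then [seq rcons q f | q <- walks n', f <- admissible_codes]
  else [:: [::]].

Lemma mem_walks n q : size q = n -> all admissible q -> q \in walks n.
Proof.
elim: n q => [|n IH] q; first by case: q.
case/lastP: q => [//|q f]; rewrite size_rcons all_rcons => -[sq] /andP[fa qa].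
by apply: allpairs_f; [exact: IH | rewrite mem_admissible_codes].
Qed.

Lemma absz_le_norm1 (v : zvec k) i : (absz (v i) <= norm1 v)%N.
Proof. by rewrite /norm1 (bigD1 i) //= leq_addr. Qed.

Lemma wdecode_inj : injective (@wdecode k m).
Proof.
move=> f g /ffunP fg; apply/ffunP => i; have := fg i; rewrite !ffunE => e.
by apply: val_inj => /=; lia.
Qed.

Definition encode (v : zvec k) : code :=
  [ffun i => insubd (Ordinal (ltn_addl (2 * m) (ltnSn 0)))
                    (absz (v i + m%:Z)%R)].

Lemma encodeK v : (norm1 v <= m)%N -> wdecode (encode v) = v.
Proof.
move=> vm; apply/ffunP => i; rewrite !ffunE val_insubd.
have := absz_le_norm1 v i; move: (v i) => x xv.
have xm : (absz x <= m)%N by apply: leq_trans vm.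
have -> : (absz (x + m%:Z)%R < 2 * m + 1)%N by lia.
lia.
Qed.

Lemma admissible_encode v : (norm1 v <= m)%N -> admissible (encode v).
Proof. by move=> vm; rewrite /admissible encodeK. Qed.

End Walks.

Section ExponentialMoment.
Variable R : realType.

Lemma expR_le_quadratic (y : R) : `|y| <= 2^-1 -> expR y <= 1 + y + 2 * y ^+ 2.
Proof.
rewrite ler_norml => /andP[ylo yhi].
have ey0 := expR_gt0 y.
have eyy : expR y * (1 - y) <= 1.
  by have := expR_ge1Dx (- y); rewrite expRN -(ler_pM2l ey0) mulfV ?gt_eqF.
have : 1 <= (1 - y) * (1 + y + 2 * y ^+ 2).
  have : 0 <= y ^+ 2 * (1 - 2 * y) by apply: mulr_ge0; [exact: sqr_ge0 | lra].
  rewrite expr2; nra.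
rewrite expr2; nra.
Qed.

Lemma expR_centered_le (th M x : R) : 0 <= th -> 4 * th * M <= 1 ->
  `|x| <= 2 * M -> expR (- th * x) <= 1 - th * x + 8 * th ^+ 2 * M ^+ 2.
Proof.
move=> th0 thM xM; have x0 := normr_ge0 x.
have small : `|- th * x| <= 2^-1 by rewrite normrM normrN (ger0_norm th0); nra.
apply: le_trans (expR_le_quadratic small) _.
have x2 : x ^+ 2 <= 4 * M ^+ 2 by rewrite -real_normK ?num_real // !expr2; nra.
have := ler_wpM2l (sqr_ge0 th) x2; rewrite !expr2; nra.
Qed.

Lemma sum_expR_centered_le (I : eqType) (r : seq I) (q a : I -> R) (M th : R) :
  (forall i, 0 <= q i) -> \sum_(i <- r) q i <= 1 ->
  (forall i, i \in r -> `|a i| <= M) -> 0 <= M -> 0 <= th -> 4 * th * M <= 1 ->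
  \sum_(i <- r) q i * expR (- th * (a i - \sum_(j <- r) q j * a j))
    <= 1 + 8 * th ^+ 2 * M ^+ 2.
Proof.
move=> q0 Q1 aM M0 th0 thM.
set mu := \sum_(j <- r) q j * a j; set Q := \sum_(j <- r) q j in Q1 *.
set c := 8 * th ^+ 2 * M ^+ 2.
have Q0 : 0 <= Q by exact: sumr_ge0.
have c0 : 0 <= c by rewrite /c !expr2; nra.
have muM : `|mu| <= M.
  apply: le_trans (ler_norm_sum _ _ _) _.
  apply: le_trans (_ : _ <= Q * M) _; last by rewrite -[leRHS]mul1r ler_wpM2r.
  rewrite /Q mulr_suml big_seq_cond [leRHS]big_seq_cond.
  by apply: ler_sum => i /andP[ir _]; rewrite normrM ger0_norm // ler_wpM2l // aM.
apply: le_trans (_ : _ <= \sum_(i <- r) q i * (1 - th * (a i - mu) + c)) _.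
  rewrite big_seq_cond [leRHS]big_seq_cond; apply: ler_sum => i /andP[ir _].
  apply/ler_wpM2l/expR_centered_le => //.
  by apply: le_trans (ler_normB _ _) _; have := aM i ir; lra.
rewrite (eq_bigr (fun i => q i * (1 + c) - th * (q i * a i) + th * mu * q i));
  last by move=> i _; ring.
rewrite !big_split /= sumrN -!mulr_suml -!mulr_sumr -/mu -/Q.
have : - th * mu * (1 - Q) <= th * M * (1 - Q).
  apply: ler_wpM2r; first lra.
  rewrite mulNr -mulrN; apply: ler_wpM2l => //.
  by rewrite -normrN in muM; apply: le_trans (ler_norm _) muM.
have : th * M * (1 - Q) <= 1 - Q by rewrite -[leRHS]mul1r ler_wpM2r; lra.
have : Q * c <= c by rewrite -[leRHS]mul1r ler_wpM2r.
nra.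
Qed.

End ExponentialMoment.

Section Coordinates.
Variables (R : realType) (k : nat).

Lemma zadd_inj (s : zvec k) : injective (zadd s).
Proof.
move=> u v /ffunP uv; apply/ffunP => i.
by have := uv i; rewrite !ffunE => /addrI.
Qed.

Lemma alpha_zsub (u v : zvec k) : alpha (zsub u v) = alpha u - alpha v.
Proof. by rewrite /alpha -sumrB; apply: eq_bigr => i _; rewrite ffunE. Qed.

Lemma abs_alpha_le_norm1 (w : zvec k) : `|(alpha w)%:~R : R| <= (norm1 w)%:R.
Proof.
rewrite /alpha /norm1 rmorph_sum natr_sum; apply: le_trans (ler_norm_sum _ _ _) _.
by apply: ler_sum => i _; rewrite natr_absz intr_norm.
Qed.

Lemma norm1_alpha (s : zvec k) : nonneg_vec s -> (norm1 s)%:R = (alpha s)%:~R :> R.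
Proof.
move=> s0; rewrite /norm1 /alpha natr_sum rmorph_sum.
by apply: eq_bigr => i _; rewrite natr_absz ger0_norm.
Qed.

End Coordinates.

Section Drift.
Variables (k m : nat) (R : realType) (Pi : zvec k -> zvec k -> R).
Local Notation code := {ffun 'I_k -> 'I_(2 * m + 1)}.

Definition drift (s : zvec k) : R :=
  \sum_(f <- admissible_codes k m) Pi s (zadd s (wdecode f)) * (alpha (wdecode f))%:~R.

Fixpoint centered_sum (s : zvec k) (q : seq code) : R :=
  if q is f :: q' then
    (alpha (wdecode f))%:~R - drift s + centered_sum (zadd s (wdecode f)) q'
  else 0.

Lemma centered_sum_rcons s q f : centered_sum s (rcons q f) =
  centered_sum s q + ((alpha (wdecode f))%:~R - drift (walk_end s q)).
Proof. by elim: q s => [|g q IH] s /=; rewrite ?addr0 ?add0r // IH addrA. Qed.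

Section Trajectory.
Variable zs : nat -> zvec k.
Hypothesis bounded_steps : forall i, (norm1 (zsub (zs i.+1) (zs i)) <= m)%N.

Definition trajectory_codes (n : nat) : seq code :=
  [seq encode m (zsub (zs i.+1) (zs i)) | i <- iota 0 n].

Lemma trajectory_codesS n : trajectory_codes n.+1 =
  rcons (trajectory_codes n) (encode m (zsub (zs n.+1) (zs n))).
Proof. by rewrite /trajectory_codes -{1}[n.+1]addn1 iotaD map_cat cats1. Qed.

Lemma size_trajectory_codes n : size (trajectory_codes n) = n.
Proof. by rewrite size_map size_iota. Qed.

Lemma take_trajectory_codes i n : (i <= n)%N ->
  take i (trajectory_codes n) = trajectory_codes i.
Proof. by move=> le_in; rewrite /trajectory_codes -map_take take_iota (minn_idPl le_in). Qed.

Lemma walk_end_trajectory_codes n : walk_end (zs 0) (trajectory_codes n) = zs n.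
Proof.
elim: n => [//|n IH]; rewrite trajectory_codesS walk_end_rcons IH encodeK //.
by apply/ffunP => i; rewrite !ffunE addrC subrK.
Qed.

Lemma trajectory_codes_in_walks n : trajectory_codes n \in walks k m n.
Proof.
apply: mem_walks; first exact: size_trajectory_codes.
by apply/allP => f /mapP [i _ ->]; exact: admissible_encode.
Qed.

Lemma centered_sum_trajectory_codes n :
  centered_sum (zs 0) (trajectory_codes n) =
  \sum_(0 <= i < n) ((alpha (zsub (zs i.+1) (zs i)))%:~R - drift (zs i)).
Proof.
elim: n => [|n IH]; first by rewrite big_nil.
rewrite trajectory_codesS centered_sum_rcons IH big_nat_recr //=.
by rewrite walk_end_trajectory_codes encodeK.
Qed.

Lemma norm1_trajectory n : nonneg_vec (zs n) ->
  (norm1 (zs n))%:R = (alpha (zs 0))%:~R + \sum_(0 <= i < n) drift (zs i)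
                      + centered_sum (zs 0) (trajectory_codes n).
Proof.
move=> zs_n0; rewrite centered_sum_trajectory_codes -addrA -big_split /=.
under eq_bigr do rewrite addrC subrK alpha_zsub intrB.
by rewrite telescope_sumr // norm1_alpha // addrC subrK.
Qed.

End Trajectory.
End Drift.

Section FiniteUnions.
Context d (T : ringOfSetsType d) (R : realFieldType) (mu : {content set T -> \bar R}).
Variables (I : choiceType) (F : I -> set T).
Hypothesis measurable_F : forall i, measurable (F i).

Lemma measure_bigsetU_seq (r : seq I) : uniq r -> trivIset [set` r] F ->
  mu (\big[setU/set0]_(i <- r) F i) = (\sum_(i <- r) mu (F i))%E.
Proof.
elim: r => [|i r IH] /=; first by rewrite !big_nil measure0.
case/andP => i_r r_uniq disj; rewrite !big_cons measureU ?IH //.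
- by apply: sub_trivIset disj => j /= jr; rewrite inE jr orbT.
- exact: bigsetU_measurable.
apply/seteqP; split => // x [Fix]; rewrite -bigcup_seq => -[j /= jr Fjx].
have ij : i = j by apply: disj; [exact: mem_head | rewrite /= inE jr orbT | exists x].
by move: i_r; rewrite ij jr.
Qed.

Lemma measure_bigsetU_seq_le (r : seq I) (C : pred I) :
  (mu (\big[setU/set0]_(i <- r | C i) F i) <= \sum_(i <- r | C i) mu (F i))%E.
Proof.
elim: r => [|i r IH]; first by rewrite !big_nil measure0.
rewrite !big_cons; case: ifP => _ //; apply: le_trans (measureU2 _ _ _) _ => //.
  exact: bigsetU_measurable.
exact: leeD.
Qed.

End FiniteUnions.

Section BorelCantelli.
Context d (T : measurableType d) (R : realType) (mu : {measure set T -> \bar R}).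

Lemma nneseries_geometric_lty (r : R) : 0 <= r < 1 ->
  (\sum_(0 <= n <oo) (r ^+ n)%:E < +oo)%E.
Proof.
case/andP => r0 r1; have r_lt1 : `|r| < 1 by rewrite ger0_norm.
rewrite (_ : (fun n => \sum_(0 <= i < n) (r ^+ i)%:E)%E =
             EFin \o series (geometric 1 r)); last first.
  apply/funext => n /=; rewrite sumEFin /series /=; congr (_%:E).
  by apply: eq_bigr => i _; rewrite /geometric /= mul1r.
by rewrite EFin_lim ?ltry //; exact: is_cvg_geometric_series.
Qed.

Lemma ae_eventually_notin_geometric (A : (set T)^nat) (r : R) :
  (forall n, measurable (A n)) -> 0 <= r < 1 ->
  (forall n, mu (A n) <= (r ^+ n)%:E)%E ->
  {ae mu, forall x, \forall n \near \oo, ~ A n x}.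
Proof.
move=> mA r01 muA; exists (lim_sup_set A); split.
- by apply: bigcapT_measurable => n; apply: bigcup_measurable => j _.
- apply: lim_sup_set_cvg0 => //.
  apply: le_lt_trans (nneseries_geometric_lty r01).
  by apply: lee_nneseries => n _ //; exact: measure_ge0.
move=> x /= not_ev N _; apply: contrapT => noA; apply: not_ev.
by exists N => // n /= Nn An; apply: noA; exists n.
Qed.

Lemma ae_forall_countable (I : countType) (Q : I -> T -> Prop) :
  (forall i, {ae mu, forall x, Q i x}) -> {ae mu, forall x, forall i, Q i x}.
Proof.
move=> aeQ.
have : {ae mu, forall x, forall n, if unpickle n is Some i then Q i x else True}.
  by apply: ae_foralln => n; case: (unpickle n) => [i|]; [exact: aeQ | exact: nearW].
by apply: filterS => x Qx i; have := Qx (pickle i); rewrite pickleK.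
Qed.

End BorelCantelli.

Section MarkovChainPaths.
Variables (k m : nat) (R : realType) (d : measure_display) (Omega : measurableType d).
Variables (P : probability Omega R) (z : nat -> Omega -> zvec k).
Variable Pi : zvec k -> zvec k -> R.
Hypothesis measurable_z : forall n s, measurable [set om | z n om = s].
Hypothesis Pi_ge0 : forall s s', 0 <= Pi s s'.
Hypothesis markov : markov_chain P z Pi.
Local Notation code := {ffun 'I_k -> 'I_(2 * m + 1)}.

Definition cylinder (s0 : zvec k) (q : seq code) : set Omega :=
  [set om | forall i, (i <= size q)%N -> z i om = walk_end s0 (take i q)].

Lemma measurable_cylinder s0 q : measurable (cylinder s0 q).
Proof.
rewrite (_ : cylinder s0 q = \bigcap_(i in [set i | (i <= size q)%N])
                               [set om | z i om = walk_end s0 (take i q)]).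
  exact: bigcap_measurableType.
by apply/seteqP; split => om cyl i /cyl.
Qed.

Lemma cylinderE s0 q : cylinder s0 q =
  [set om | forall i : 'I_(size q).+1, z i om = walk_end s0 (take i q)].
Proof.
apply/seteqP; split => om cyl i => [|le_iq]; first exact/cyl/(ltn_ord i).
exact: (cyl (Ordinal (le_iq : (i < (size q).+1)%N))).
Qed.

Lemma cylinder_rcons s0 q f : cylinder s0 (rcons q f) =
  cylinder s0 q `&` [set om | z (size q).+1 om = walk_end s0 (rcons q f)].
Proof.
have take_rcons i : (i <= size q)%N -> take i (rcons q f) = take i q.
  by move=> le_iq; rewrite -cats1 takel_cat.
apply/seteqP; split => om /=.
- move=> cyl; split; last by rewrite cyl ?size_rcons // take_oversize ?size_rcons.
  by move=> i le_iq; rewrite -take_rcons // cyl // size_rcons leqW.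
- move=> [cyl last] i; rewrite size_rcons leq_eqVlt => /orP[/eqP ->|lt_iq].
    by rewrite take_oversize ?size_rcons.
  by rewrite take_rcons // cyl.
Qed.

Definition Pr (A : set Omega) : R := fine (P A).

Lemma Pr_ge0 A : 0 <= Pr A.
Proof. exact/fine_ge0/measure_ge0. Qed.

Lemma Pr_cylinderE s0 q : P (cylinder s0 q) = (Pr (cylinder s0 q))%:E.
Proof. by rewrite /Pr fineK // fin_num_measure //; exact: measurable_cylinder. Qed.

Lemma Pr_cylinder_rcons s0 q f : Pr (cylinder s0 (rcons q f)) =
  Pi (walk_end s0 q) (walk_end s0 (rcons q f)) * Pr (cylinder s0 q).
Proof.
have -> : cylinder s0 (rcons q f) =
    [set om | (forall i : 'I_(size q).+1, z i om = walk_end s0 (take i q))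
              /\ z (size q).+1 om = walk_end s0 (rcons q f)].
  by rewrite cylinder_rcons cylinderE.
rewrite /Pr markov /= take_size -cylinderE.
by rewrite fineM // fin_num_measure //; exact: measurable_cylinder.
Qed.

Lemma sum_Pr_cylinder_rcons s0 q :
  \sum_(f <- admissible_codes k m) Pr (cylinder s0 (rcons q f)) <= Pr (cylinder s0 q).
Proof.
have disj : trivIset [set` admissible_codes k m] (fun f => cylinder s0 (rcons q f)).
  move=> f g _ _ [om [] /=]; rewrite !cylinder_rcons => -[_ /= zf] [_ zg].
  by move: zg => /=; rewrite zf !walk_end_rcons => /zadd_inj /wdecode_inj.
rewrite -lee_fin -sumEFin.
under eq_bigr do rewrite -Pr_cylinderE.
rewrite -measure_bigsetU_seq ?uniq_admissible_codes //; last first.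
  by move=> f; exact: measurable_cylinder.
rewrite -Pr_cylinderE; apply: le_measure; rewrite ?inE.
- by apply: bigsetU_measurable => f _; exact: measurable_cylinder.
- exact: measurable_cylinder.
by rewrite -bigcup_seq => om [f _]; rewrite cylinder_rcons => -[].
Qed.

Lemma sum_kernel_le1 s0 q : 0 < Pr (cylinder s0 q) ->
  \sum_(f <- admissible_codes k m)
     Pi (walk_end s0 q) (zadd (walk_end s0 q) (wdecode f)) <= 1.
Proof.
move=> Pr_gt0; have := sum_Pr_cylinder_rcons s0 q.
under eq_bigr do rewrite Pr_cylinder_rcons walk_end_rcons.
by rewrite -mulr_suml -[leRHS]mul1r ler_pM2r.
Qed.

Lemma exp_moment_step s0 th q : 0 <= th -> 4 * th * m%:R <= 1 ->
  \sum_(f <- admissible_codes k m) Pr (cylinder s0 (rcons q f)) *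
     expR (- th * centered_sum Pi s0 (rcons q f))
  <= Pr (cylinder s0 q) * expR (- th * centered_sum Pi s0 q) *
     (1 + 8 * th ^+ 2 * m%:R ^+ 2).
Proof.
move=> th0 thm; set e := walk_end s0 q.
have -> : \sum_(f <- admissible_codes k m) Pr (cylinder s0 (rcons q f)) *
            expR (- th * centered_sum Pi s0 (rcons q f)) =
    Pr (cylinder s0 q) * expR (- th * centered_sum Pi s0 q) *
    \sum_(f <- admissible_codes k m) Pi e (zadd e (wdecode f)) *
       expR (- th * ((alpha (wdecode f))%:~R - drift m Pi e)).
  rewrite mulr_sumr; apply: eq_bigr => f _.
  by rewrite Pr_cylinder_rcons centered_sum_rcons walk_end_rcons mulrDr expRD; ring.
have := Pr_ge0 (cylinder s0 q); rewrite le0r => /orP[/eqP ->|Pr_gt0].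
  by rewrite !mul0r.
apply: ler_wpM2l; first by rewrite mulr_ge0 ?Pr_ge0 ?expR_ge0.
apply: (@sum_expR_centered_le R _ _ (fun f => Pi e (zadd e (wdecode f)))
          (fun f => (alpha (wdecode f))%:~R)) => //.
- exact: sum_kernel_le1.
- move=> f; rewrite mem_admissible_codes => fa.
  by apply: le_trans (abs_alpha_le_norm1 _ _) _; rewrite ler_nat.
Qed.

Lemma exp_moment_le s0 th n : 0 <= th -> 4 * th * m%:R <= 1 ->
  \sum_(q <- walks k m n) Pr (cylinder s0 q) * expR (- th * centered_sum Pi s0 q)
    <= (1 + 8 * th ^+ 2 * m%:R ^+ 2) ^+ n.
Proof.
move=> th0 thm; elim: n => [|n IH] /=.
  rewrite big_seq1 /= mulr0 expR0 mulr1 expr0 -lee_fin -Pr_cylinderE.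
  exact/probability_le1/measurable_cylinder.
rewrite big_allpairs_dep /= exprS mulrC.
apply: le_trans (_ : _ <= \sum_(q <- walks k m n) Pr (cylinder s0 q) *
    expR (- th * centered_sum Pi s0 q) * (1 + 8 * th ^+ 2 * m%:R ^+ 2)) _.
  by apply: ler_sum => q _; exact: exp_moment_step.
by rewrite -mulr_suml ler_wpM2r // addr_ge0 // !mulr_ge0 // sqr_ge0.
Qed.

Definition deviation_event s0 (c : R) (n : nat) : set Omega :=
  \big[setU/set0]_(q <- walks k m n | centered_sum Pi s0 q <= c) cylinder s0 q.

Lemma measurable_deviation_event s0 c n : measurable (deviation_event s0 c n).
Proof. by apply: bigsetU_measurable => q _; exact: measurable_cylinder. Qed.

Lemma deviation_event_le s0 c n th : 0 <= th -> 4 * th * m%:R <= 1 ->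
  (P (deviation_event s0 c n) <=
     (expR (th * c) * (1 + 8 * th ^+ 2 * m%:R ^+ 2) ^+ n)%:E)%E.
Proof.
move=> th0 thm; apply: le_trans (measure_bigsetU_seq_le _ _ _ _) _.
  by move=> q; exact: measurable_cylinder.
rewrite (eq_bigr (fun q => (Pr (cylinder s0 q))%:E)); last by move=> q _; exact: Pr_cylinderE.
rewrite sumEFin lee_fin.
apply: le_trans (ler_wpM2l (expR_ge0 _) (exp_moment_le s0 n th0 thm)).
rewrite mulr_sumr big_mkcond /=; apply: ler_sum => q _; case: ifP => [Sc|_].
  rewrite mulrCA -expRD -[leLHS]mulr1 ler_wpM2l ?Pr_ge0 //.
  by apply: le_trans (expR_ge1Dx _); rewrite lerDl mulNr -mulrBr mulr_ge0 ?subr_ge0.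
by rewrite !mulr_ge0 ?expR_ge0 ?Pr_ge0.
Qed.

Lemma ae_eventually_not_deviation s0 eps : (0 < m)%N -> 0 < eps <= 1 ->
  {ae P, forall om, \forall n \near \oo, ~ deviation_event s0 (- (n%:R * eps)) n om}.
Proof.
move=> m_gt0 /andP[eps0 eps1]; set M : R := m%:R.
have M1 : 1 <= M by rewrite /M ler1n.
(* This th makes rho = 1 + th eps / 2, so the Chernoff ratio exp(-th eps) rho is < 1. *)
set th := eps / (16 * M ^+ 2).
have thE : th * (16 * M ^+ 2) = eps by rewrite /th divfK // mulf_neq0 // expf_neq0 //; lra.
have th0 : 0 < th by rewrite /th divr_gt0 // mulr_gt0 // exprn_gt0 //; lra.
have thm : 4 * th * M <= 1 by rewrite expr2 in thE; nra.
set rho := 1 + 8 * th ^+ 2 * M ^+ 2.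
have rho_lt : rho < 1 + th * eps by rewrite /rho -thE !expr2; nra.
apply: (@ae_eventually_notin_geometric _ _ _ _ _ (expR (- (th * eps)) * rho)).
- by move=> n; exact: measurable_deviation_event.
- have rho0 : 0 <= rho by rewrite /rho !expr2; nra.
  rewrite mulr_ge0 ?expR_ge0 //= expRN mulrC ltr_pdivrMr ?expR_gt0 // mul1r.
  exact: lt_le_trans rho_lt (expR_ge1Dx _).
- move=> n; apply: le_trans (deviation_event_le _ _ _ (ltW th0) thm) _.
  by rewrite lee_fin [leRHS]exprMn -expRM_natl !mulrN mulrCA.
Qed.

Lemma trajectory_in_cylinder om n :
  (forall i, (norm1 (zsub (z i.+1 om) (z i om)) <= m)%N) ->
  cylinder (z 0 om) (trajectory_codes m (z^~ om) n) om.
Proof.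
move=> steps i; rewrite size_trajectory_codes => le_in.
by rewrite take_trajectory_codes // walk_end_trajectory_codes.
Qed.

Lemma ae_centered_sum_trajectory_gt : (0 < m)%N ->
  {ae P, forall om, (forall i, (norm1 (zsub (z i.+1 om) (z i om)) <= m)%N) ->
    forall eps, 0 < eps -> \forall n \near \oo,
      - (n%:R * eps) < centered_sum Pi (z 0 om) (trajectory_codes m (z^~ om) n)}.
Proof.
move=> m_gt0.
have : {ae P, forall om, forall s0 (j : nat), \forall n \near \oo,
           ~ deviation_event s0 (- (n%:R * j.+1%:R^-1)) n om}.
  apply: ae_forall_countable => s0; apply: ae_foralln => j.
  apply: ae_eventually_not_deviation => //.
  by rewrite invr_gt0 ltr0n /= invf_le1 ?ler1n.
apply: filterS => om not_dev steps eps eps0.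
have [j _ /(_ j (leqnn j)) j_eps] := near_infty_natSinv_lt (PosNum eps0).
move: (not_dev (z 0 om) j); apply: filterS => n not_dev_n.
rewrite ltNge; apply/negP => dev; apply: not_dev_n.
rewrite /deviation_event -bigcup_seq_cond.
exists (trajectory_codes m (z^~ om) n); last exact: trajectory_in_cylinder steps.
rewrite /= (trajectory_codes_in_walks steps) /=.
have le_eps : - (n%:R * eps) <= - (n%:R / j.+1%:R) by rewrite lerN2 ler_wpM2l // ltW.
exact: le_trans dev le_eps.
Qed.

End MarkovChainPaths.

Section Asymptotics.
Variable R : realType.

Lemma eventually_near_limit_points (k : nat) (K : set 'rV[R]_k) (x : nat -> 'rV[R]_k)
    (r : R) : 0 < r -> (forall n, `|x n| <= r) -> limit_points x `<=` K ->
  forall e, 0 < e -> \forall n \near \oo, exists2 y, K y & `|x n - y| < e.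
Proof.
move=> r0 xr xK e e0; apply: contrapT => not_near.
have far N : exists n, (N <= n)%N /\ forall y, K y -> e <= `|x n - y|.
  apply: contrapT => none; apply: not_near; exists N => // n /= Nn.
  apply: contrapT => no_y; apply: none; exists n; split => // y Ky.
  by rewrite leNgt; apply/negP => lt_e; apply: no_y; exists y.
have [phi phiP] := choice far.
set B := closed_ball (0 : 'rV[R]_k) r.
have B_compact : compact B.
  apply: bounded_closed_compact; last exact: closed_ball_closed.
  exists r; split; first exact: num_real.
  move=> M rM v; rewrite /B closed_ballE // /closed_ball_ /= sub0r normrN => vr.
  exact: le_trans vr (ltW rM).
have xB : ((fun N => x (phi N)) @ \oo) B.
  by exists 0%N => // N _ /=; rewrite /B closed_ballE // /closed_ball_ /= sub0r normrN.
have [y [_ y_cluster]] := B_compact _ _ xB.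
(* a cluster point of the subsequence x \o phi is a limit point of x, so it lies in K *)
have Ky : K y.
  apply: xK => e' e'0 N.
  have [v [[n [Nn ->]] yv]] :
      ([set v | exists n, (N <= n)%N /\ v = x n] `&` ball y e') !=set0.
    apply: y_cluster; last exact: nbhsx_ballx.
    exists N => // N' /= NN'; exists (phi N'); split => //.
    by apply: leq_trans NN' _; case: (phiP N').
  by exists n; split => //; move: yv; rewrite -ball_normE /ball_ /= distrC.
have [v [[N ->] yv]] : ([set v | exists N, v = x (phi N)] `&` ball y e) !=set0.
  apply: y_cluster; last exact: nbhsx_ballx.
  by exists 0%N => // N _ /=; exists N.
move: yv; rewrite -ball_normE /ball_ /= distrC => lt_e.
by have := lt_le_trans lt_e ((phiP N).2 y Ky); rewrite ltxx.
Qed.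

Lemma limn_einf_ge_near (u : (\bar R)^nat) (l : \bar R) :
  (\forall n \near \oo, l <= u n)%E -> (l <= limn_einf u)%E.
Proof.
move=> [N _ Nu]; rewrite limn_einf_lim; apply: lime_ge; first exact: is_cvg_einfs.
exists N => // n /= Nn; apply/ereal_infP => _ [j /= nj <-].
by apply: Nu; exact: leq_trans nj.
Qed.

Lemma sum_ge_of_eventually_ge (b : nat -> R) (c : R) (N : nat) :
  (forall i, (N <= i)%N -> c <= b i) ->
  forall n, - \sum_(0 <= i < N) `|b i - c| <= \sum_(0 <= i < n) (b i - c).
Proof.
move=> bc n.
have head_ge p : - \sum_(0 <= i < p) `|b i - c| <= \sum_(0 <= i < p) (b i - c).
  rewrite -sumrN; apply: ler_sum => i _.
  by rewrite lerNl -normrN; exact: ler_norm.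
have abs_ge0 p q : 0 <= \sum_(p <= i < q) `|b i - c| by exact: sumr_ge0.
case: (leqP n N) => [le_nN|lt_Nn].
  apply: le_trans (head_ge n); rewrite (@big_cat_nat _ _ _ n 0 N) //= opprD.
  by rewrite lerBlDr lerDl.
rewrite (@big_cat_nat _ _ _ N 0 n) //=; last exact: ltnW.
have : 0 <= \sum_(N <= i < n) (b i - c).
  by rewrite big_nat_cond; apply: sumr_ge0 => i /andP[/andP[Ni _] _]; rewrite subr_ge0 bc.
by have := head_ge N; lra.
Qed.

Lemma limn_einf_average_ge (zn b S : nat -> R) (z0 : R) (lam : \bar R) :
  (forall n, zn n = z0 + \sum_(0 <= i < n) b i + S n) ->
  (forall eps, 0 < eps -> \forall n \near \oo, - (n%:R * eps) < S n) ->
  (forall eta, 0 < eta -> \forall i \near \oo, (lam <= (b i + eta)%:E)%E) ->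
  (lam <= limn_einf (fun n => (zn n / n%:R)%:E))%E.
Proof.
move=> znE S_ge b_ge; case: lam b_ge => [l| |] b_ge; last by rewrite leNye.
  2: by have [N _ /(_ N (leqnn N))] := b_ge 1 ltr01.
apply/lee_subgt0Pr => eta eta0; apply: limn_einf_ge_near.
have eta4 : 0 < eta / 4 by rewrite divr_gt0.
have [N1 _ N1b] := b_ge _ eta4; set c := l - eta / 4.
have bc i : (N1 <= i)%N -> c <= b i by move=> /N1b; rewrite lee_fin /c; lra.
set A := z0 - \sum_(0 <= i < N1) `|b i - c|.
near=> n.
have n_gt0 : 0 < n%:R :> R by near: n; exists 1%N => // n /=; rewrite ltr0n.
have S_n : - (n%:R * (eta / 4)) < S n by near: n; exact: S_ge.
have A_n : - (n%:R * (eta / 2)) <= A.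
  near: n; move: (nbhs_infty_gtr (`|A| / (eta / 2))); apply: filterS => n.
  rewrite ltr_pdivrMr ?divr_gt0 // => An; rewrite lerNl; apply: le_trans (ltW An).
  by rewrite -normrN ler_norm.
have sum_ge := sum_ge_of_eventually_ge bc n.
rewrite sumrB sumr_const_nat subn0 -mulr_natl in sum_ge.
rewrite -EFinB lee_fin ler_pdivlMr // znE; rewrite /A /c in A_n sum_ge.
nra.
Unshelve. all: by end_near. Qed.

End Asymptotics.

Section DistributionVectors.
Variables (R : realType) (k : nat).

Lemma coord_le_norm1 (s : zvec k) i : nonneg_vec s -> (s i)%:~R <= (norm1 s)%:R :> R.
Proof.
move=> s0; rewrite norm1_alpha // /alpha rmorph_sum (bigD1 i) //= lerDl.
by apply: sumr_ge0 => j _; rewrite ler0z.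
Qed.

Lemma distr_vec_simplex (s : zvec k) : nonneg_vec s -> norm1 s <> 0%N ->
  simplex R k (distr_vec R s).
Proof.
move=> s0 /eqP s_neq0; have N_gt0 : 0 < (norm1 s)%:R :> R by rewrite ltr0n lt0n.
rewrite /distr_vec (negbTE s_neq0); split => [i|].
  by rewrite mxE divr_ge0 // ler0z.
under eq_bigr do rewrite mxE.
move: N_gt0; rewrite norm1_alpha // /alpha rmorph_sum -mulr_suml => N_gt0.
by rewrite divff // gt_eqF.
Qed.

Lemma norm_distr_vec_le1 (s : zvec k) : nonneg_vec s -> `|distr_vec R s| <= 1.
Proof.
move=> s0; rewrite /distr_vec; case: eqP => [_|/eqP s_neq0]; first by rewrite normr0.
have N_gt0 : 0 < (norm1 s)%:R :> R by rewrite ltr0n lt0n.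
rewrite [leLHS]/Num.norm /= mx_normrE; apply: bigmax_le => // -[i j] _ /=.
rewrite !mxE ger0_norm; last by rewrite divr_ge0 ?ler0z // ltW.
by rewrite ler_pdivrMr // mul1r coord_le_norm1.
Qed.

Lemma dist1_le_norm (x y : 'rV[R]_k) : dist1 x y <= k%:R * `|x - y|.
Proof.
rewrite /dist1 mulr_natl -[k in _ *+ k]card_ord -sumr_const; apply: ler_sum => i _.
rewrite (_ : x ord0 i - y ord0 i = (x - y) ord0 i); last by rewrite !mxE.
rewrite [leRHS]/Num.norm /= mx_normrE.
exact: (le_bigmax _ (fun ij : 'I_1 * 'I_k => `|(x - y) ij.1 ij.2|) (ord0, i)).
Qed.

End DistributionVectors.

Section MeanDrift.
Variables (k m : nat) (R : realType) (Pi : zvec k -> zvec k -> R).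
Variables (p : zvec k -> 'rV[R]_k -> R) (a : R) (K : set 'rV[R]_k).

Definition mean_drift (x : 'rV[R]_k) : R := sum_w m (fun w => p w x * (alpha w)%:~R).

Hypothesis a_ge0 : 0 <= a.
Hypothesis p_close : forall (s w : zvec k), nonneg_vec s -> norm1 s <> 0%N ->
  (norm1 w <= m)%N -> `|p w (distr_vec R s) - Pi s (zadd s w)| <= a / (norm1 s)%:R.
Hypothesis p_lipschitz : forall w, (norm1 w <= m)%N -> exists L : R,
  forall x y, simplex R k x -> simplex R k y -> `|p w x - p w y| <= L * dist1 x y.
Hypothesis K_simplex : K `<=` simplex R k.

Lemma mean_drift_le_drift : exists2 C, 0 <= C & forall s, nonneg_vec s ->
  norm1 s <> 0%N -> mean_drift (distr_vec R s) <= drift m Pi s + C / (norm1 s)%:R.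
Proof.
exists (a * \sum_(f <- admissible_codes k m) `|(alpha (wdecode f))%:~R : R|).
  by rewrite mulr_ge0 // sumr_ge0.
move=> s s0 s_neq0; rewrite /mean_drift sum_wE /drift -lerBlDl -sumrB mulrAC mulr_sumr.
rewrite big_seq_cond [leRHS]big_seq_cond; apply: ler_sum => f /andP[fa _].
rewrite mem_admissible_codes in fa.
by rewrite -mulrBl; apply: le_trans (ler_norm _) _; rewrite normrM ler_wpM2r ?p_close.
Qed.

Lemma mean_drift_lipschitz : exists2 L, 0 <= L & forall x y, simplex R k x ->
  simplex R k y -> mean_drift y <= mean_drift x + L * `|x - y|.
Proof.
have /choice [L Lp] : forall w : zvec k, exists L : R, (norm1 w <= m)%N ->
    forall x y, simplex R k x -> simplex R k y -> `|p w x - p w y| <= L * dist1 x y.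
  move=> w; case: (boolP (norm1 w <= m)%N) => [/p_lipschitz [L Lp]|_].
    by exists L.
  by exists 0.
exists (\sum_(f <- admissible_codes k m)
          k%:R * `|L (wdecode f)| * `|(alpha (wdecode f))%:~R : R|).
  by apply: sumr_ge0 => f _; rewrite !mulr_ge0.
move=> x y sx sy; rewrite /mean_drift !sum_wE -lerBlDl -sumrB mulr_suml.
rewrite big_seq_cond [leRHS]big_seq_cond; apply: ler_sum => f /andP[fa _].
rewrite mem_admissible_codes in fa; set w := wdecode f.
have pxy : `|p w x - p w y| <= `|L w| * (k%:R * `|x - y|).
  apply: le_trans (Lp _ fa x y sx sy) _.
  apply: le_trans (ler_wpM2r (sumr_ge0 _ _) (ler_norm (L w))) _ => [i _|].
    exact: normr_ge0.
  by rewrite ler_wpM2l // dist1_le_norm.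
rewrite -mulrBl; apply: le_trans (ler_norm _) _; rewrite normrM distrC.
have -> : k%:R * `|L w| * `|(alpha w)%:~R| * `|x - y| =
          `|L w| * (k%:R * `|x - y|) * `|(alpha w)%:~R : R| by ring.
exact: ler_wpM2r.
Qed.

Lemma eventually_drift_ge (zs : nat -> zvec k) :
  (forall n, nonneg_vec (zs n)) ->
  limit_points (fun n => distr_vec R (zs n)) `<=` K ->
  ((fun n => (norm1 (zs n))%:R : R) @ \oo --> +oo) ->
  forall eta, 0 < eta -> \forall i \near \oo,
    (ereal_inf [set (mean_drift x)%:E | x in K] <= (drift m Pi (zs i) + eta)%:E)%E.
Proof.
move=> zs0 limK zs_oo eta eta0.
have [L L0 lip] := mean_drift_lipschitz.
have [C C0 drift_ge] := mean_drift_le_drift.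
set dl := eta / (2 * (L + 1)).
have dl0 : 0 < dl by rewrite divr_gt0 // mulr_gt0 // ltr_pwDr.
have L_dl : L * dl <= eta / 2.
  have L1_neq0 : L + 1 != 0 by rewrite gt_eqF // ltr_pwDr.
  have -> : eta / 2 = (L + 1) * dl by rewrite /dl; field.
  by apply: ler_wpM2r; [exact: ltW | rewrite lerDl].
have near_K := eventually_near_limit_points ltr01
  (fun n => norm_distr_vec_le1 R (zs0 n)) limK dl0.
have big_norm := (cvgryPge _).1 zs_oo (2 * C / eta + 1).
near=> i.
have [y Ky xy] : exists2 y, K y & `|distr_vec R (zs i) - y| < dl by near: i.
have N_ge : 2 * C / eta + 1 <= (norm1 (zs i))%:R by near: i; exact: big_norm.
have N_gt0 : 0 < (norm1 (zs i))%:R :> R.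
  by apply: lt_le_trans N_ge; rewrite ltr_pwDr // !divr_ge0 ?mulr_ge0 // ltW.
have N_neq0 : norm1 (zs i) <> 0%N by move=> N0; rewrite N0 ltxx in N_gt0.
have C_N : C / (norm1 (zs i))%:R <= eta / 2.
  rewrite ler_pdivrMr //.
  have -> : C = (eta / 2) * (2 * C / eta) by field; rewrite gt_eqF.
  by apply: ler_wpM2l; [rewrite divr_ge0 // ltW | lra].
have inf_le : (ereal_inf [set (mean_drift x)%:E | x in K] <= (mean_drift y)%:E)%E.
  by apply: ereal_inf_lbound; exists y.
apply: le_trans inf_le _; rewrite lee_fin.
have := lip _ _ (distr_vec_simplex R (zs0 i) N_neq0) (K_simplex Ky).
have := drift_ge _ (zs0 i) N_neq0.
have : L * `|distr_vec R (zs i) - y| <= L * dl by rewrite ler_wpM2l // ltW.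
lra.
Unshelve. all: by end_near. Qed.

End MeanDrift.

Unset Implicit Arguments.

Theorem proposition1
  (k m : nat) (hk : (1 <= k)%N) (hm : (1 <= m)%N)
  (R : realType) (d : measure_display) (Omega : measurableType d)
  (P : probability Omega R)
  (z : nat -> Omega -> zvec k)
  (Pi : zvec k -> zvec k -> R)
  (p : zvec k -> 'rV[R]_k -> R) (a : R)
  (K : set 'rV[R]_k)
  (* state space Z_+^k *)
  (hstate : forall n om, nonneg_vec (z n om))
  (hmeas : forall n s, measurable [set om | z n om = s])
  (* Pi is a transition kernel on Z_+^k *)
  (hPi0 : forall s s', 0 <= Pi s s')
  (hPi1 : forall s, nonneg_vec s ->
     (\esum_(s' in nonneg_vec (k:=k)) (Pi s s')%:E = 1)%E)
  (* (z_n) is a homogeneous Markov chain with kernel Pi *)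
  (hmarkov : markov_chain P z Pi)
  (* (A1) *)
  (hA1 : {ae P, forall om, forall n, (norm1 (zsub (z n.+1 om) (z n om)) <= m)%N})
  (* (A2) *)
  (hp01 : forall w x, (norm1 w <= m)%N -> simplex R k x -> 0 <= p w x <= 1)
  (hpLip : forall w, (norm1 w <= m)%N -> exists L : R,
     forall x y, simplex R k x -> simplex R k y ->
       `|p w x - p w y| <= L * dist1 x y)
  (ha : 0 < a)
  (hA2 : forall (s w : zvec k), nonneg_vec s -> norm1 s <> 0%N ->
     (norm1 w <= m)%N ->
     `|p w (distr_vec R s) - Pi s (zadd s w)| <= a / (norm1 s)%:R)
  (* K compact subset of S_k *)
  (hKsub : K `<=` simplex R k)
  (hK : compact K)
  (hlambda : (0 < ereal_inf
     [set (sum_w m (fun w => p w x * (alpha w)%:~R))%:E | x in K])%E) :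
  {ae P, forall om,
     limit_points (fun n => distr_vec R (z n om)) `<=` K ->
     ((fun n => ((norm1 (z n om))%:R : R)) @ \oo --> +oo) ->
     (ereal_inf [set (sum_w m (fun w => p w x * (alpha w)%:~R))%:E | x in K]
        <= limn_einf (fun n => ((norm1 (z n om))%:R / n%:R : R)%:E))%E}.
Proof.
have dev := ae_centered_sum_trajectory_gt hmeas hPi0 hmarkov hm.
move: hA1 dev; apply: filterS2 => om steps dev K_lim norm_oo.
apply: (limn_einf_average_ge (fun n => norm1_trajectory Pi steps (hstate n om))).
- exact: dev steps.
- move=> eta eta0; have drift_ge :=
    eventually_drift_ge (ltW ha) hA2 hpLip hKsub (hstate^~ om) K_lim norm_oo eta0.
  exact: drift_ge.
Qed.
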